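(* Let $g$ be any classifier (possibly depending on the data) and $\hat\eta$ an estimator of $\eta$ constructed on $\mathcal{D}_n$, and suppose $\mathbb{E}_{X\mid S=s}[\hat\eta(X,s)]>0$ and $\hat{\mathbb{E}}_{X\mid S=s}[\hat\eta(X,s)]>0$ for $s\in\{0,1\}$. Then almost surely $$\Delta(g,\mathbb{P})\le \hat\Delta(g,\mathbb{P})+\sum_{s\in\{0,1\}}\Bigg(2\frac{\mathbb{E}_{X\mid S=s}|\eta(X,s)-\hat\eta(X,s)|}{\mathbb{P}(Y=1\mid S=s)}+\frac{\big|(\mathbb{E}_{X\mid S=s}-\hat{\mathbb{E}}_{X\mid S=s})[\hat\eta(X,s)g(X,s)]\big|}{\mathbb{E}_{X\mid S=s}[\hat\eta(X,s)]}+\frac{\big|(\hat{\mathbb{E}}_{X\mid S=s}-\mathbb{E}_{X\mid S=s})[\hat\eta(X,s)]\big|}{\mathbb{E}_{X\mid S=s}[\hat\eta(X,s)]}\Bigg).$$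
   Context: Let $(X,S,Y)$ be a random tuple in $\mathbb{R}^d\times\{0,1\}\times\{0,1\}$ with joint distribution $\mathbb{P}$, where $\mathbb{P}(S=1)\in(0,1)$ and $\mathbb{P}(Y=1\mid S=s)>0$ for $s\in\{0,1\}$. A classifier is a measurable map $g:\mathbb{R}^d\times\{0,1\}\to\{0,1\}$. The regression function is $\eta(x,s)=\mathbb{P}(Y=1\mid X=x,S=s)$; $\mathbb{E}_{X\mid S=s}$ is expectation w.r.t. the conditional law of $X$ given $S=s$ (over a fresh independent $X$, with data held fixed). Unfairness: $\Delta(g,\mathbb{P})=|\mathbb{P}(g(X,S)=1\mid S=1,Y=1)-\mathbb{P}(g(X,S)=1\mid S=0,Y=1)|$. Data: labeled $\mathcal{D}_n$ i.i.d. from $\mathbb{P}$ and independent unlabeled $\mathcal{D}_N=\{(X_i,S_i)\}$ i.i.d. from the law of $(X,S)$, containing points of both groups; $\hat\eta:\mathbb{R}^d\times\{0,1\}\to[0,1]$ is built from $\mathcal{D}_n$ only; $\hat{\mathbb{E}}_{X\mid S=s}$ is expectation w.r.t. the empirical distribution of $\{X:(X,S)\in\mathcal{D}_N,S=s\}$. Empirical unfairness: $$\hat\Delta(g,\mathbb{P})=\Big|\frac{\hat{\mathbb{E}}_{X\mid S=1}[\hat\eta(X,1)g(X,1)]}{\hat{\mathbb{E}}_{X\mid S=1}[\hat\eta(X,1)]}-\frac{\hat{\mathbb{E}}_{X\mid S=0}[\hat\eta(X,0)g(X,0)]}{\hat{\mathbb{E}}_{X\mid S=0}[\hat\eta(X,0)]}\Big|.$$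 *)

From Stdlib Require Fin.
From Stdlib Require Import Reals List Bool.
Open Scope R_scope.

Definition pt (d : nat) := Fin.t d -> R.

Definition bounded {T : Type} (f : T -> R) : Prop :=
  exists M, forall t, Rabs (f t) <= M.

(* A probability law on T, represented by its expectation (integration)
   functional on bounded functions: linear, monotone, normalised. *)
Record is_expectation {T : Type} (E : (T -> R) -> R) : Prop := {
  E_lin : forall a b f h, bounded f -> bounded h ->
            E (fun t => a * f t + b * h t) = a * E f + b * E h;
  E_mono : forall f h, bounded f -> bounded h ->
            (forall t, f t <= h t) -> E f <= E h;
  E_one : E (fun _ => 1) = 1 }.

Definition indic (b : bool) : R := if b then 1 else 0.

Definition XYS (d : nat) := (pt d * bool * bool)%type.
Definition getX {d} (z : XYS d) : pt d := fst (fst z).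
Definition getS {d} (z : XYS d) : bool := snd (fst z).
Definition getY {d} (z : XYS d) : bool := snd z.

Definition prob {d} (PE : (XYS d -> R) -> R) (A : XYS d -> bool) : R :=
  PE (fun z => indic (A z)).
Definition condE {d} (PE : (XYS d -> R) -> R) (A : XYS d -> bool)
  (f : XYS d -> R) : R :=
  PE (fun z => f z * indic (A z)) / prob PE A.

Definition EXs {d} (PE : (XYS d -> R) -> R) (s : bool) (h : pt d -> R) : R :=
  condE PE (fun z => Bool.eqb (getS z) s) (fun z => h (getX z)).

(* eta is (a version of) the regression function P(Y=1 | X, S). *)
Definition is_regression {d} (PE : (XYS d -> R) -> R)
  (eta : pt d -> bool -> R) : Prop :=
  (forall x s, 0 <= eta x s <= 1) /\
  forall (s : bool) (h : pt d -> R), bounded h ->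
    PE (fun z => h (getX z) * indic (Bool.eqb (getS z) s) * indic (getY z))
    = PE (fun z => h (getX z) * indic (Bool.eqb (getS z) s) * eta (getX z) s).

Definition pos_rate {d} (PE : (XYS d -> R) -> R) (g : pt d -> bool -> bool)
  (s : bool) : R :=
  condE PE (fun z => Bool.eqb (getS z) s && getY z)
    (fun z => indic (g (getX z) (getS z))).

Definition unfairness {d} (PE : (XYS d -> R) -> R) (g : pt d -> bool -> bool) : R :=
  Rabs (pos_rate PE g true - pos_rate PE g false).

Definition group {d} (DN : list (pt d * bool)) (s : bool) : list (pt d * bool) :=
  filter (fun p => Bool.eqb (snd p) s) DN.
Definition emp_EXs {d} (DN : list (pt d * bool)) (s : bool) (h : pt d -> R) : R :=
  fold_right Rplus 0 (map (fun p => h (fst p)) (group DN s))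
  / INR (length (group DN s)).

Definition emp_unfairness {d} (DN : list (pt d * bool)) (etah : pt d -> bool -> R)
  (g : pt d -> bool -> bool) : R :=
  Rabs (emp_EXs DN true (fun x => etah x true * indic (g x true))
          / emp_EXs DN true (fun x => etah x true)
        - emp_EXs DN false (fun x => etah x false * indic (g x false))
          / emp_EXs DN false (fun x => etah x false)).

Definition bound_term {d} (PE : (XYS d -> R) -> R) (DN : list (pt d * bool))
  (eta etah : pt d -> bool -> R) (g : pt d -> bool -> bool) (s : bool) : R :=
  2 * EXs PE s (fun x => Rabs (eta x s - etah x s))
      / condE PE (fun z => Bool.eqb (getS z) s) (fun z => indic (getY z))
  + Rabs (EXs PE s (fun x => etah x s * indic (g x s))
          - emp_EXs DN s (fun x => etah x s * indic (g x s)))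
      / EXs PE s (fun x => etah x s)
  + Rabs (emp_EXs DN s (fun x => etah x s) - EXs PE s (fun x => etah x s))
      / EXs PE s (fun x => etah x s).

(* For each group s, the true positive rate P(g = 1 | S = s, Y = 1) equals the
   ratio a/q of conditional expectations a = E_{X|S=s}[eta g] and
   q = E_{X|S=s}[eta]; this uses only the defining property of the regression
   function eta.  The empirical plug-in rate is aT/bt with
   aT = Ê_{X|S=s}[etah g] and bt = Ê_{X|S=s}[etah].  Passing through the
   intermediate population quantities ah = E_{X|S=s}[etah g] and
   bh = E_{X|S=s}[etah], an elementary perturbation bound for ratios whose
   numerator is a fraction of the denominator gives the s-th summand of the
   bound; the theorem follows from the triangle inequality over the groups. *)
From Pilot Require Import Defs.
From Stdlib Require Import Reals List Bool.
From Stdlib Require Import Lra Psatz FunctionalExtensionality.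
Open Scope R_scope.

Lemma Rabs_div_pos (x y : R) : 0 < y -> Rabs (x / y) = Rabs x / y.
Proof.
  intros Hy. unfold Rdiv.
  rewrite Rabs_mult, (Rabs_pos_eq (/ y)); [reflexivity|].
  left; apply Rinv_0_lt_compat; lra.
Qed.

Lemma Rabs_scaled_ratio_le (r x y : R) : 0 <= r <= 1 -> 0 < y ->
  Rabs (r * x / y) <= Rabs x / y.
Proof.
  intros Hr Hy. rewrite Rabs_div_pos by lra.
  rewrite Rabs_mult, (Rabs_pos_eq r) by lra.
  apply Rmult_le_compat_r; [left; apply Rinv_0_lt_compat; lra|].
  pose proof (Rabs_pos x). nra.
Qed.

Lemma proportion_01 (x y : R) : 0 < y -> 0 <= x <= y -> 0 <= x / y <= 1.
Proof.
  intros Hy Hx. assert (Hxy : x / y * y = x) by (field; lra).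
  split; nra.
Qed.

(* Perturbation bound for ratios: comparing a/q with aT/bt through ah/bh,
   where ah/bh and aT/bt are proportions in [0,1] and e controls both
   |a - ah| and |bh - q|. *)
Lemma ratio_perturbation (a q ah bh aT bt e : R) :
  0 < q -> 0 < bh -> 0 < bt -> 0 <= ah <= bh -> 0 <= aT <= bt ->
  Rabs (a - ah) <= e -> Rabs (bh - q) <= e ->
  Rabs (a / q - aT / bt) <= 2 * e / q + Rabs (ah - aT) / bh + Rabs (bt - bh) / bh.
Proof.
  intros Hq Hbh Hbt Hah HaT Ha Hb.
  assert (Hr : 0 <= ah / bh <= 1) by (apply proportion_01; lra).
  assert (Ht : 0 <= aT / bt <= 1) by (apply proportion_01; lra).
  assert (Hsplit : a / q - aT / bt =
            (a - ah) / q + ah / bh * (bh - q) / q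
          + (ah - aT) / bh + aT / bt * (bt - bh) / bh) by (field; lra).
  assert (B1 : Rabs ((a - ah) / q) <= e / q).
  { rewrite Rabs_div_pos by lra.
    apply Rmult_le_compat_r; [left; apply Rinv_0_lt_compat|]; lra. }
  assert (B2 : Rabs (ah / bh * (bh - q) / q) <= e / q).
  { eapply Rle_trans; [apply Rabs_scaled_ratio_le; lra|].
    apply Rmult_le_compat_r; [left; apply Rinv_0_lt_compat|]; lra. }
  assert (B3 : Rabs ((ah - aT) / bh) = Rabs (ah - aT) / bh)
    by (apply Rabs_div_pos; lra).
  assert (B4 : Rabs (aT / bt * (bt - bh) / bh) <= Rabs (bt - bh) / bh)
    by (apply Rabs_scaled_ratio_le; lra).
  assert (Htwo : 2 * e / q = e / q + e / q) by (field; lra).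
  rewrite Hsplit, Htwo.
  set (t1 := (a - ah) / q) in *. set (t2 := ah / bh * (bh - q) / q) in *.
  set (t3 := (ah - aT) / bh) in *. set (t4 := aT / bt * (bt - bh) / bh) in *.
  pose proof (Rabs_triang (t1 + t2 + t3) t4).
  pose proof (Rabs_triang (t1 + t2) t3).
  pose proof (Rabs_triang t1 t2).
  lra.
Qed.

Lemma indic_01 (b : bool) : 0 <= indic b <= 1.
Proof. destruct b; simpl; lra. Qed.

Lemma indic_andb (a b : bool) : indic (a && b) = indic a * indic b.
Proof. destruct a, b; simpl; ring. Qed.

Lemma bounded_const {T : Type} (c : R) : Defs.bounded (fun _ : T => c).
Proof. exists (Rabs c). intros; lra. Qed.

Lemma bounded_01 {T : Type} (f : T -> R) :
  (forall t, 0 <= f t <= 1) -> Defs.bounded f.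
Proof.
  intros H. exists 1. intro t. specialize (H t). rewrite Rabs_pos_eq; lra.
Qed.

Lemma bounded_restrict {T : Type} (f : T -> R) (A : T -> bool) :
  Defs.bounded f -> Defs.bounded (fun t => f t * indic (A t)).
Proof.
  intros [M HM]. exists M. intro t.
  pose proof (indic_01 (A t)). pose proof (HM t). pose proof (Rabs_pos (f t)).
  rewrite Rabs_mult, (Rabs_pos_eq (indic (A t))) by lra. nra.
Qed.

Lemma bounded_lincomb {T : Type} (a b : R) (f h : T -> R) :
  Defs.bounded f -> Defs.bounded h -> Defs.bounded (fun t => a * f t + b * h t).
Proof.
  intros [M HM] [N HN]. exists (Rabs a * M + Rabs b * N). intro t.
  eapply Rle_trans; [apply Rabs_triang|]. rewrite !Rabs_mult.
  pose proof (HM t). pose proof (HN t). pose proof (Rabs_pos a).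
  pose proof (Rabs_pos b). nra.
Qed.

Section Expectation.
Variables (T : Type) (E : (T -> R) -> R).
Hypothesis HE : is_expectation E.

Lemma E_zero : E (fun _ => 0) = 0.
Proof.
  pose proof (E_lin _ HE 0 0 _ _ (bounded_const 1) (bounded_const 1)) as H.
  cbv beta in H.
  replace (fun _ : T => 0 * 1 + 0 * 1) with (fun _ : T => 0) in H
    by (apply functional_extensionality; intros; ring).
  rewrite H; ring.
Qed.

Lemma E_nonneg (f : T -> R) : Defs.bounded f -> (forall t, 0 <= f t) -> 0 <= E f.
Proof.
  intros Bf H. rewrite <- E_zero. apply (E_mono _ HE); auto. apply bounded_const.
Qed.

Lemma E_diff_le (f h k : T -> R) :
  Defs.bounded f -> Defs.bounded h -> Defs.bounded k ->
  (forall t, Rabs (f t - h t) <= k t) -> Rabs (E f - E h) <= E k.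
Proof.
  intros Bf Bh Bk H.
  assert (Hd : E (fun t => 1 * f t + -1 * h t) = E f - E h)
    by (rewrite (E_lin _ HE); auto; ring).
  assert (Bd := bounded_lincomb 1 (-1) f h Bf Bh).
  assert (Bn := bounded_lincomb (-1) 0 _ _ Bk Bk).
  assert (Hn : E (fun t => -1 * k t + 0 * k t) = - E k)
    by (rewrite (E_lin _ HE); auto; ring).
  rewrite <- Hd. apply Rabs_le. split.
  - rewrite <- Hn. apply (E_mono _ HE); auto.
    intro t. specialize (H t). pose proof (Rle_abs (- (f t - h t))).
    rewrite Rabs_Ropp in *. lra.
  - apply (E_mono _ HE); auto.
    intro t. specialize (H t). pose proof (Rle_abs (f t - h t)). lra.
Qed.

Lemma condE_expectation (A : T -> bool) :
  0 < E (fun t => indic (A t)) ->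
  is_expectation (fun f => E (fun t => f t * indic (A t)) / E (fun t => indic (A t))).
Proof.
  intros Hp. split.
  - intros a b f h Bf Bh.
    replace (fun t => (a * f t + b * h t) * indic (A t))
      with (fun t => a * (f t * indic (A t)) + b * (h t * indic (A t)))
      by (apply functional_extensionality; intros; ring).
    rewrite (E_lin _ HE) by (apply bounded_restrict; auto). field; lra.
  - intros f h Bf Bh H. apply Rmult_le_compat_r.
    + left; apply Rinv_0_lt_compat; lra.
    + apply (E_mono _ HE); try apply bounded_restrict; auto.
      intro t. pose proof (indic_01 (A t)). pose proof (H t). nra.
  - replace (fun t => 1 * indic (A t)) with (fun t => indic (A t))
      by (apply functional_extensionality; intros; ring).
    field; lra.
Qed.

(* A conditional expectation can only be nonzero if the event has positive
   probability (division by zero yields zero). *)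
Lemma prob_pos_of_condE_pos (A : T -> bool) (f : T -> R) :
  0 < E (fun t => f t * indic (A t)) / E (fun t => indic (A t)) ->
  0 < E (fun t => indic (A t)).
Proof.
  intros H.
  assert (Hp : 0 <= E (fun t => indic (A t)))
    by (apply E_nonneg; [apply bounded_01|]; intros; apply indic_01).
  destruct Hp as [Hp|Hp]; [exact Hp|].
  rewrite <- Hp, Rdiv_0_r in H. lra.
Qed.

End Expectation.

Lemma pullback_expectation {T U : Type} (E : (T -> R) -> R) (phi : T -> U) :
  is_expectation E -> is_expectation (fun h : U -> R => E (fun t => h (phi t))).
Proof.
  intros HE. split.
  - intros a b f h [M HM] [N HN].
    apply (E_lin _ HE); [exists M|exists N]; intros; auto.
  - intros f h [M HM] [N HN] H.
    apply (E_mono _ HE); [exists M|exists N|]; intros; auto.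
  - apply (E_one _ HE).
Qed.

Lemma EXs_expectation {d} (PE : (XYS d -> R) -> R) (s : bool) :
  is_expectation PE -> 0 < prob PE (fun z => Bool.eqb (getS z) s) ->
  is_expectation (EXs PE s).
Proof.
  intros HE Hp.
  exact (pullback_expectation _ getX (condE_expectation _ PE HE _ Hp)).
Qed.

Lemma emp_EXs_sandwich {d} (DN : list (pt d * bool)) (s : bool) (h1 h2 : pt d -> R) :
  (forall x, 0 <= h1 x <= h2 x) ->
  0 <= emp_EXs DN s h1 <= emp_EXs DN s h2.
Proof.
  intros H. unfold emp_EXs, Rdiv.
  assert (Hsum : 0 <= fold_right Rplus 0 (map (fun p => h1 (fst p)) (group DN s))
                 <= fold_right Rplus 0 (map (fun p => h2 (fst p)) (group DN s))).
  { induction (group DN s) as [|p l IH]; cbn [map fold_right]; [lra|].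
    pose proof (H (fst p)). lra. }
  assert (Hn : 0 <= / INR (length (group DN s))).
  { destruct (Req_dec (INR (length (group DN s))) 0) as [Z|Z].
    - rewrite Z, Rinv_0; lra.
    - left; apply Rinv_0_lt_compat. pose proof (pos_INR (length (group DN s))). lra. }
  split; [apply Rmult_le_pos|apply Rmult_le_compat_r]; lra.
Qed.

Section Regression.
Variables (d : nat) (PE : (XYS d -> R) -> R) (eta : pt d -> bool -> R) (s : bool).
Hypothesis Heta : is_regression PE eta.
Hypothesis Hp : 0 < prob PE (fun z => Bool.eqb (getS z) s).

Lemma joint_label_moment (h : pt d -> R) : Defs.bounded h ->
  PE (fun z => h (getX z) * indic (Bool.eqb (getS z) s && getY z))
  = prob PE (fun z => Bool.eqb (getS z) s) * EXs PE s (fun x => h x * eta x s).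
Proof.
  intros Bh. destruct Heta as [_ Hreg].
  unfold EXs, condE, prob.
  replace (fun z => h (getX z) * indic (Bool.eqb (getS z) s && getY z))
    with (fun z => h (getX z) * indic (Bool.eqb (getS z) s) * indic (getY z))
    by (apply functional_extensionality; intro z; rewrite indic_andb; ring).
  rewrite Hreg by exact Bh.
  replace (fun z => h (getX z) * indic (Bool.eqb (getS z) s) * eta (getX z) s)
    with (fun z => h (getX z) * eta (getX z) s * indic (Bool.eqb (getS z) s))
    by (apply functional_extensionality; intros; ring).
  unfold prob in Hp. field; lra.
Qed.

Lemma label_rate_eq :
  condE PE (fun z => Bool.eqb (getS z) s) (fun z => indic (getY z))
  = EXs PE s (fun x => eta x s).
Proof.
  unfold condE at 1.
  replace (fun z => indic (getY z) * indic (Bool.eqb (getS z) s))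
    with (fun z => (fun _ : pt d => 1) (getX z) * indic (Bool.eqb (getS z) s && getY z))
    by (apply functional_extensionality; intro z; rewrite indic_andb; ring).
  rewrite (joint_label_moment (fun _ => 1)) by apply bounded_const.
  replace (fun x => 1 * eta x s) with (fun x => eta x s)
    by (apply functional_extensionality; intros; ring).
  field; lra.
Qed.

Lemma pos_rate_eq (g : pt d -> bool -> bool) :
  0 < EXs PE s (fun x => eta x s) ->
  pos_rate PE g s =
  EXs PE s (fun x => eta x s * indic (g x s)) / EXs PE s (fun x => eta x s).
Proof.
  intros Hq. unfold pos_rate, condE, prob.
  replace (fun z => indic (g (getX z) (getS z)) * indic (Bool.eqb (getS z) s && getY z))
    with (fun z => indic (g (getX z) s) * indic (Bool.eqb (getS z) s && getY z))
    by (apply functional_extensionality; intro z;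
        destruct (Bool.eqb (getS z) s) eqn:Es; simpl; [|ring];
        apply Bool.eqb_prop in Es; rewrite Es; reflexivity).
  replace (fun z => indic (Bool.eqb (getS z) s && getY z))
    with (fun z => (fun _ : pt d => 1) (getX z) * indic (Bool.eqb (getS z) s && getY z))
    by (apply functional_extensionality; intros; ring).
  rewrite (joint_label_moment (fun x => indic (g x s)))
    by (apply bounded_01; intros; apply indic_01).
  rewrite (joint_label_moment (fun _ => 1)) by apply bounded_const.
  replace (fun x => 1 * eta x s) with (fun x => eta x s)
    by (apply functional_extensionality; intros; ring).
  replace (fun x => indic (g x s) * eta x s) with (fun x => eta x s * indic (g x s))
    by (apply functional_extensionality; intros; ring).
  field; lra.
Qed.

End Regression.

Lemma group_rate_error {d} (PE : (XYS d -> R) -> R) (eta etah : pt d -> bool -> R)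
  (g : pt d -> bool -> bool) (DN : list (pt d * bool)) (s : bool) :
  is_expectation PE ->
  0 < condE PE (fun z => Bool.eqb (getS z) s) (fun z => indic (getY z)) ->
  is_regression PE eta ->
  (forall x s, 0 <= etah x s <= 1) ->
  0 < EXs PE s (fun x => etah x s) ->
  0 < emp_EXs DN s (fun x => etah x s) ->
  Rabs (pos_rate PE g s -
        emp_EXs DN s (fun x => etah x s * indic (g x s)) / emp_EXs DN s (fun x => etah x s))
  <= bound_term PE DN eta etah g s.
Proof.
  intros HE Hq Hreg Hh Hbh Hbt.
  assert (Hp := prob_pos_of_condE_pos _ PE HE _ _ Hq).
  assert (HEs := EXs_expectation PE s HE Hp).
  assert (Heta : forall x, 0 <= eta x s <= 1) by (intros; apply (proj1 Hreg)).
  assert (Hetah : forall x, 0 <= etah x s <= 1) by auto.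
  assert (Hg : forall x, 0 <= indic (g x s) <= 1) by (intros; apply indic_01).
  assert (Hetag : forall x, 0 <= eta x s * indic (g x s) <= 1)
    by (intro x; pose proof (Heta x); pose proof (Hg x); split; nra).
  assert (Hetahg : forall x, 0 <= etah x s * indic (g x s) <= etah x s)
    by (intro x; pose proof (Hetah x); pose proof (Hg x); split; nra).
  assert (Herr : forall x, 0 <= Rabs (eta x s - etah x s) <= 1)
    by (intro x; pose proof (Heta x); pose proof (Hetah x);
        split; [apply Rabs_pos|apply Rabs_le; lra]).
  assert (Bg : Defs.bounded (fun x => etah x s * indic (g x s)))
    by (apply bounded_01; intro x; pose proof (Hetah x); pose proof (Hetahg x); lra).
  assert (Hq' := Hq). rewrite (label_rate_eq d PE eta s Hreg Hp) in Hq'.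
  unfold bound_term.
  rewrite (pos_rate_eq d PE eta s Hreg Hp g Hq'), (label_rate_eq d PE eta s Hreg Hp).
  apply ratio_perturbation; auto.
  - split.
    + apply (E_nonneg _ _ HEs); [exact Bg|]. intro x; apply Hetahg.
    + apply (E_mono _ HEs); [exact Bg|apply bounded_01; exact Hetah|]. intro x; apply Hetahg.
  - apply emp_EXs_sandwich. exact Hetahg.
  - apply (E_diff_le _ _ HEs); [apply bounded_01; exact Hetag|exact Bg|apply bounded_01; exact Herr|].
    intro x. replace (eta x s * indic (g x s) - etah x s * indic (g x s))
      with ((eta x s - etah x s) * indic (g x s)) by ring.
    rewrite Rabs_mult, (Rabs_pos_eq (indic _)) by apply Hg.
    pose proof (Hg x). pose proof (Rabs_pos (eta x s - etah x s)). nra.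
  - rewrite Rabs_minus_sym.
    apply (E_diff_le _ _ HEs); try (apply bounded_01; assumption).
    intros; lra.
Qed.

Lemma Rabs_diff_via (r1 r0 e1 e0 : R) :
  Rabs (r1 - r0) <= Rabs (e1 - e0) + (Rabs (r0 - e0) + Rabs (r1 - e1)).
Proof.
  replace (r1 - r0) with ((e1 - e0) + ((r1 - e1) + - (r0 - e0))) by ring.
  pose proof (Rabs_triang (e1 - e0) ((r1 - e1) + - (r0 - e0))).
  pose proof (Rabs_triang (r1 - e1) (- (r0 - e0))).
  rewrite Rabs_Ropp in *. lra.
Qed.

Theorem mainTheorem4 (d : nat) (PE : (XYS d -> R) -> R)
  (eta etah : pt d -> bool -> R) (g : pt d -> bool -> bool)
  (DN : list (pt d * bool)) :
  is_expectation PE ->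
  0 < prob PE (fun z => getS z) < 1 ->
  (forall s, 0 < condE PE (fun z => Bool.eqb (getS z) s) (fun z => indic (getY z))) ->
  is_regression PE eta ->
  (forall x s, 0 <= etah x s <= 1) ->
  (forall s, (0 < length (group DN s))%nat) ->
  (forall s, 0 < EXs PE s (fun x => etah x s)) ->
  (forall s, 0 < emp_EXs DN s (fun x => etah x s)) ->
  unfairness PE g <=
    emp_unfairness DN etah g
    + (bound_term PE DN eta etah g false + bound_term PE DN eta etah g true).
Proof.
  intros HE _ Hq Hreg Hh _ Hbh Hbt.
  set (emp_rate := fun s => emp_EXs DN s (fun x => etah x s * indic (g x s))
                            / emp_EXs DN s (fun x => etah x s)).
  pose proof (group_rate_error PE eta etah g DN true HE (Hq true) Hreg Hh (Hbh true) (Hbt true)).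
  pose proof (group_rate_error PE eta etah g DN false HE (Hq false) Hreg Hh (Hbh false) (Hbt false)).
  pose proof (Rabs_diff_via (pos_rate PE g true) (pos_rate PE g false)
                            (emp_rate true) (emp_rate false)).
  unfold unfairness, emp_unfairness. unfold emp_rate in *. lra.
Qed.
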